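(* Let $G=\langle r_1,r_2,s_1,s_2,c\ :\ r_1r_2=r_2r_1,\ s_1s_2=s_2s_1,\ r_1s_1c=cr_1s_1=s_1cr_1,\ r_2s_2c=s_2cr_2=cr_2s_2\rangle$, let $F=\langle r',s'\rangle$ be the free group of rank $2$, and let $p_x,p_y:G\to F$ be the homomorphisms with $p_x(r_1)=r'$, $p_x(s_2)=s'$, $p_x(r_2)=p_x(s_1)=p_x(c)=1$ and $p_y(r_2)=r'$, $p_y(s_1)=s'$, $p_y(r_1)=p_y(s_2)=p_y(c)=1$. Let $H\subseteq G$ be the subgroup generated by $r_1r_2$, $s_1s_2$, $c$, and let $g=s_2cr_1s_1cr_2$. Then $p_x(g)=p_y(g)$, $g$ has infinite order in $G$, and $g^n\notin H$ for every integer $n\neq0$.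
   Context: All groups are given by generators and relations as written; $p_x$ and $p_y$ are well-defined homomorphisms on $G$. *)

(* Groups given by generators and
   relations are modelled as words in the generators and their inverses,
   modulo the congruence generated by free cancellation and the relations. *)
From mathcomp Require Import all_boot all_algebra.
Set Implicit Arguments. Unset Strict Implicit. Unset Printing Implicit Defensive.

(* A letter is a generator together with a flag: false = x, true = x^-1. *)
Definition letter (X : Type) := (X * bool)%type.
Definition word (X : Type) := seq (letter X).

Definition inv_letter (X : Type) (a : letter X) : letter X := (a.1, ~~ a.2).
Definition inv_word (X : Type) (w : word X) : word X := rev (map (@inv_letter X) w).

Inductive weq (X : Type) (R : word X -> word X -> Prop) : word X -> word X -> Prop :=
| weq_refl w : weq R w w
| weq_sym w1 w2 : weq R w1 w2 -> weq R w2 w1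
| weq_trans w1 w2 w3 : weq R w1 w2 -> weq R w2 w3 -> weq R w1 w3
| weq_cancel (u v : word X) (a : letter X) :
    weq R (u ++ a :: inv_letter a :: v) (u ++ v)
| weq_rel (u v l r : word X) : R l r -> weq R (u ++ l ++ v) (u ++ r ++ v).

Definition wpow (X : Type) (w : word X) (n : int) : word X :=
  match n with
  | Posz k => flatten (nseq k w)
  | Negz k => flatten (nseq k.+1 (inv_word w))
  end.

Definition map_word (X Y : Type) (f : X -> word Y) (w : word X) : word Y :=
  flatten (map (fun a : letter X => if a.2 then inv_word (f a.1) else f a.1) w).

Inductive in_subgroup (X : Type) (R : word X -> word X -> Prop)
    (S : word X -> Prop) : word X -> Prop :=
| sg_one : in_subgroup R S [::]
| sg_gen h : S h -> in_subgroup R S h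
| sg_mul u v : in_subgroup R S u -> in_subgroup R S v -> in_subgroup R S (u ++ v)
| sg_inv u : in_subgroup R S u -> in_subgroup R S (inv_word u)
| sg_eq u v : weq R u v -> in_subgroup R S u -> in_subgroup R S v.

Inductive genG := r1 | r2 | s1 | s2 | cc.
Definition gl (x : genG) : letter genG := (x, false).

Inductive G_rel : word genG -> word genG -> Prop :=
| Grel1 : G_rel [:: gl r1; gl r2] [:: gl r2; gl r1]
| Grel2 : G_rel [:: gl s1; gl s2] [:: gl s2; gl s1]
| Grel3 : G_rel [:: gl r1; gl s1; gl cc] [:: gl cc; gl r1; gl s1]
| Grel4 : G_rel [:: gl cc; gl r1; gl s1] [:: gl s1; gl cc; gl r1]
| Grel5 : G_rel [:: gl r2; gl s2; gl cc] [:: gl s2; gl cc; gl r2]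
| Grel6 : G_rel [:: gl s2; gl cc; gl r2] [:: gl cc; gl r2; gl s2].

Inductive genF := r' | s'.
Definition F_rel : word genF -> word genF -> Prop := fun _ _ => False.

Definition px (x : genG) : word genF :=
  match x with r1 => [:: (r', false)] | s2 => [:: (s', false)] | _ => [::] end.
Definition py (x : genG) : word genF :=
  match x with r2 => [:: (r', false)] | s1 => [:: (s', false)] | _ => [::] end.

Inductive H_gen : word genG -> Prop :=
| Hg1 : H_gen [:: gl r1; gl r2]
| Hg2 : H_gen [:: gl s1; gl s2]
| Hg3 : H_gen [:: gl cc].

Definition g_elt : word genG := [:: gl s2; gl cc; gl r1; gl s1; gl cc; gl r2].

(* G acts on Z x bool: every generator except c flips the bit, and the
   integer coordinate is raised by r1 on bit false, lowered by r2 and raised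
   by c on bit true.  The defining relations hold for this action.  The
   generators r1 r2, s1 s2 and c of H fix (0, false), hence so does H, while
   g sends (x, false) to (x + 1, false); so g^n moves (0, false) for n <> 0,
   which shows both that g^n <> 1 and that g^n is not in H.  The images of g
   under p_x and p_y are both the word s' r'. *)
From mathcomp Require Import all_boot all_algebra.
From mathcomp Require Import zify.
Set Implicit Arguments. Unset Strict Implicit. Unset Printing Implicit Defensive.
Import GRing.Theory.
Local Open Scope ring_scope.

Section WordAction.
Variables (X T : Type) (step : letter X -> T -> T).
Hypothesis step_invK : forall a, cancel (step a) (step (inv_letter a)).

Definition act (w : word X) (p : T) : T := foldl (fun q a => step a q) p w.

Lemma act_cat u v p : act (u ++ v) p = act v (act u p).
Proof. by rewrite /act foldl_cat. Qed.

Lemma act_inv_wordK u : cancel (act u) (act (inv_word u)).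
Proof.
elim: u => [|a u IHu] p //.
by rewrite /inv_word /= rev_cons -cats1 act_cat -/(inv_word u) IHu /= step_invK.
Qed.

Lemma act_wpow_shift (w : word X) (f : int -> T) :
    (forall x, act w (f x) = f (x + 1)) ->
  forall n x, act (wpow w n) (f x) = f (x + n).
Proof.
move=> act_w [] k x; rewrite /wpow.
- elim: k x => [|k IHk] x; first by rewrite addr0.
  by rewrite [flatten _]/= act_cat act_w IHk; congr f; lia.
- have act_winv y : act (inv_word w) (f y) = f (y - 1).
    by rewrite -{1}(subrK 1 y) -act_w act_inv_wordK.
  rewrite NegzE; elim: k x => [|k IHk] x.
    by rewrite [flatten _]/= cats0 act_winv; congr f; lia.
  by rewrite [flatten _]/= act_cat act_winv IHk; congr f; lia.
Qed.

Variable R : word X -> word X -> Prop.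
Hypothesis act_rel : forall l r, R l r -> act l =1 act r.

Lemma act_weq u v : weq R u v -> act u =1 act v.
Proof.
elim=> [w|w1 w2 _ IH|w1 w2 w3 _ IH1 _ IH2|u0 v0 a|u0 v0 l r Rlr] p.
- by [].
- by rewrite IH.
- by rewrite IH1 IH2.
- by rewrite !act_cat /= step_invK.
- by rewrite !act_cat (act_rel Rlr).
Qed.

Lemma act_subgroup_fix (S : word X -> Prop) p w :
    (forall h, S h -> act h p = p) -> in_subgroup R S w -> act w p = p.
Proof.
move=> fixS; elim=> [|h /fixS|u v _ IHu _ IHv|u _ IHu|u v Euv _ IHu] //.
- by rewrite act_cat IHu IHv.
- by rewrite -{1}IHu act_inv_wordK.
- by rewrite -(act_weq Euv).
Qed.

End WordAction.

Definition gen_shift (x : genG) (b : bool) : int :=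
  match x with
  | r1 => if b then 0 else 1
  | r2 => if b then -1 else 0
  | cc => if b then 1 else 0
  | _ => 0
  end.

Definition gen_flip (x : genG) (b : bool) : bool := if x is cc then b else ~~ b.

Lemma gen_flipK x : involutive (gen_flip x).
Proof. by case: x => -[]. Qed.

Definition stepG (a : letter genG) (p : int * bool) : int * bool :=
  let: (y, b) := p in
  if a.2 then (y - gen_shift a.1 (gen_flip a.1 b), gen_flip a.1 b)
  else (y + gen_shift a.1 b, gen_flip a.1 b).

Lemma stepG_invK a : cancel (stepG a) (stepG (inv_letter a)).
Proof.
case: a => x [] [y b]; rewrite /stepG /inv_letter /= gen_flipK; congr pair; lia.
Qed.

Lemma actG_rel l r : G_rel l r -> act stepG l =1 act stepG r.
Proof. by case=> -[y []]; rewrite /act /= /stepG /=; congr pair; lia. Qed.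

Lemma actG_H_fix h : H_gen h -> act stepG h (0, false) = (0, false).
Proof. by case. Qed.

Lemma actG_g_pow n x : act stepG (wpow g_elt n) (x, false) = (x + n, false).
Proof.
rewrite (act_wpow_shift stepG_invK (f := fun y => (y, false))) // => y.
by rewrite /act /= /stepG /=; congr pair; lia.
Qed.

Theorem mainTheorem14 :
  weq F_rel (map_word px g_elt) (map_word py g_elt) /\
  (forall n : int, n != 0 -> ~ weq G_rel (wpow g_elt n) [::]) /\
  (forall n : int, n != 0 -> ~ in_subgroup G_rel H_gen (wpow g_elt n)).
Proof.
split; first exact: weq_refl.
have g_pow_moves n : n != 0 -> act stepG (wpow g_elt n) (0, false) != (0, false).
  by rewrite actG_g_pow add0r; apply: contra => /eqP[->].
split=> n /g_pow_moves /eqP moves E; apply: moves.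
- exact: (act_weq stepG_invK actG_rel E).
- exact: (act_subgroup_fix stepG_invK actG_rel actG_H_fix E).
Qed.
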